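(* Let $r \colon B \to \mathbb{I}$ and let $m \colon A \rightarrowtail B$ be a monomorphism in $\widehat{\square}_\vee$. Then the map $r \hat{\times}_B m \colon M_r(m) \to \mathbb{I} \times B$ is a trivial cofibration, i.e. it has the left lifting property with respect to every fibration (every map with the right lifting property against all maps $\delta_k \hat{\times} m'$, $k\in\{0,1\}$, $m'$ a monomorphism).
   Context: Semilattices: sets with an associative, commutative, idempotent binary operation $\vee$; homomorphisms preserve $\vee$ (no bounds required). Let $\square_\vee$ (the semilattice cube category, equivalently the Lawvere theory of semilattices with constants $0,1$ satisfying $0\vee x=x$, $1\vee x=1$) be the category whose objects are the semilattices $[1]^n$ ($n\in\mathbb{N}$, $[1]=\{0<1\}$ with $\vee=\max$, pointwise structure) and whose morphisms are all semilattice homomorphisms between them. Fix a strongly inaccessible cardinal $\kappa$ and let $\widehat{\square}_\vee$ be the category of presheaves on $\square_\vee$ valued in $\kappa$-small sets. Let $\mathbb{I}$ be the representable presheaf on $[1]$, $\delta_k \colon 1 \to \mathbb{I}$ ($k\in\{0,1\}$) the endpoint inclusions, and $\varepsilon\colon \mathbb I\to 1$ the unique map. For maps $f\colon X\to Y$, $g\colon X'\to Y'$, the pushout product $f\hat\times g$ is the induced map $(X\times Y')\sqcup_{X\times X'}(Y\times X')\to Y\times Y'$. For $r\colon B\to\mathbb I$ and $f\colon A\to B$, the unbiased mapping cylinder $M_r(f)$ is the pushout of $f \colon A \to B$ and $\langle rf, \mathrm{id}_A\rangle \colon A \to \mathbb{I}\times A$, with induced maps $c_r\colon B\to M_r(f)$,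 $d_r\colon \mathbb I\times A\to M_r(f)$. For a mono $m\colon A\to B$, $r\hat\times_B m\colon M_r(m)\to \mathbb I\times B$ is the unique map restricting to $\langle r,\mathrm{id}_B\rangle$ on $B$ and to $\mathbb I\times m$ on $\mathbb I\times A$. *)

From mathcomp Require Import all_boot.
Set Implicit Arguments. Unset Strict Implicit. Unset Printing Implicit Defensive.

(* Object n = the semilattice [1]^n, carried by n-tuples of booleans with
   pointwise join (orb = max on {0<1}). *)
Definition cube (n : nat) : finType := (n.-tuple bool : finType).
Definition cjoin n (x y : cube n) : cube n := [tuple tnth x i || tnth y i | i < n].

(* Morphisms [1]^n -> [1]^m: all join-preserving maps (no bounds required). *)
Definition is_hom n m (f : {ffun cube n -> cube m}) : bool :=
  [forall x, [forall y, f (cjoin x y) == cjoin (f x) (f y)]].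
Definition hom n m := {f : {ffun cube n -> cube m} | is_hom f}.
Definition homf n m (f : hom n m) : cube n -> cube m := fun x => sval f x.

Lemma homf_join n m (f : hom n m) x y : homf f (cjoin x y) = cjoin (homf f x) (homf f y).
Proof. rewrite /homf; have /forallP /(_ x) /forallP /(_ y) /eqP := svalP f; exact. Qed.

Lemma is_hom_id n : is_hom [ffun x : cube n => x].
Proof. by apply/forallP=> x; apply/forallP=> y; rewrite !ffunE. Qed.
Definition idH n : hom n n := exist (@is_hom n n) _ (is_hom_id n).

Lemma is_hom_comp n m k (g : hom m k) (f : hom n m) :
  is_hom [ffun x => homf g (homf f x)].
Proof. by apply/forallP=> x; apply/forallP=> y; rewrite !ffunE !homf_join. Qed.
Definition compH n m k (g : hom m k) (f : hom n m) : hom n k :=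
  exist (@is_hom n k) _ (is_hom_comp g f).

Lemma compH1 n m (g : hom n m) : compH g (idH n) = g.
Proof. apply: val_inj; apply/ffunP=> x; by rewrite /= /homf /= !ffunE. Qed.
Lemma compHA n m k l (h : hom k l) (g : hom m k) (f : hom n m) :
  compH h (compH g f) = compH (compH h g) f.
Proof. by apply: val_inj; apply/ffunP=> x; rewrite /= /homf /= !ffunE. Qed.

(* ---------- Presheaves on □_∨ (valued in a fixed universe, playing the
   role of the κ-small sets for κ strongly inaccessible) ---------- *)
Record psh := Psh {
  ob : nat -> Type;
  act : forall n m, hom n m -> ob m -> ob n;
  act_id : forall n x, act (idH n) x = x;
  act_comp : forall n m k (g : hom m k) (f : hom n m) x,
      act (compH g f) x = act f (act g x) }.

Arguments act p {n m}.
Arguments Psh : clear implicits.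

Unset Implicit Arguments.
Record pmor (X Y : psh) := PMap {
  cmp : forall n, ob X n -> ob Y n;
  cmp_nat : forall n m (f : hom n m) x, cmp n (act X f x) = act Y f (cmp m x) }.
Set Implicit Arguments.
Arguments PMap {X Y}.
Arguments cmp {X Y}.
Arguments cmp_nat {X Y}.

Definition eqm X Y (f g : pmor X Y) : Prop := forall n x, cmp f n x = cmp g n x.

Definition idm (X : psh) : pmor X X := @PMap X X (fun n x => x) (fun _ _ _ _ => erefl).

Lemma compm_nat X Y Z (g : pmor Y Z) (f : pmor X Y) n m (h : hom n m) x :
  cmp g n (cmp f n (act X h x)) = act Z h (cmp g m (cmp f m x)).
Proof. by rewrite !cmp_nat. Qed.
Definition compm X Y Z (g : pmor Y Z) (f : pmor X Y) : pmor X Z :=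
  @PMap X Z (fun n x => cmp g n (cmp f n x)) (compm_nat g f).

Definition mono X Y (m : pmor X Y) : Prop :=
  forall (Z : psh) (g h : pmor Z X), eqm (compm m g) (compm m h) -> eqm g h.

Definition oneP : psh := @Psh (fun _ => unit) (fun _ _ _ x => x)
  (fun _ _ => erefl) (fun _ _ _ _ _ _ => erefl).

Definition Ih : psh := @Psh (fun n => hom n 1) (fun n m f g => compH g f)
  (fun n g => compH1 g) (fun n m k g f x => compHA x g f).

Definition prodP (X Y : psh) : psh := @Psh (fun n => (ob X n * ob Y n)%type)
  (fun n m f p => (act X f p.1, act Y f p.2))
  (fun n p => ltac:(by case: p => a b /=; rewrite !act_id))
  (fun n m k g f p => ltac:(by rewrite /= !act_comp)).

Lemma pairm_nat Z X Y (f : pmor Z X) (g : pmor Z Y) n m (h : hom n m) x :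
  (cmp f n (act Z h x), cmp g n (act Z h x)) = act (prodP X Y) h (cmp f m x, cmp g m x).
Proof. by rewrite !cmp_nat. Qed.
Definition pairm Z X Y (f : pmor Z X) (g : pmor Z Y) : pmor Z (prodP X Y) :=
  @PMap Z (prodP X Y) (fun n z => (cmp f n z, cmp g n z)) (pairm_nat f g).

Lemma prodm_nat X Y X' Y' (f : pmor X Y) (g : pmor X' Y') n m (h : hom n m) p :
  (cmp f n (act X h p.1), cmp g n (act X' h p.2)) =
  act (prodP Y Y') h (cmp f m p.1, cmp g m p.2).
Proof. by rewrite !cmp_nat. Qed.
Definition prodm X Y X' Y' (f : pmor X Y) (g : pmor X' Y') :
  pmor (prodP X X') (prodP Y Y') :=
  @PMap (prodP X X') (prodP Y Y') (fun n p => (cmp f n p.1, cmp g n p.2))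
    (prodm_nat f g).

Lemma is_hom_const n (k : bool) : is_hom [ffun _ : cube n => [tuple of [:: k]] : cube 1].
Proof.
apply/forallP=> x; apply/forallP=> y; rewrite !ffunE; apply/eqP.
by apply: eq_from_tnth => i; rewrite tnth_mktuple orbb.
Qed.
Definition constH n (k : bool) : hom n 1 := exist (@is_hom n 1) _ (is_hom_const n k).
Lemma delta_nat (k : bool) n m (h : hom n m) (x : ob oneP m) :
  constH n k = compH (constH m k) h.
Proof. apply: val_inj; apply/ffunP=> y; by rewrite /= /homf /= !ffunE. Qed.
Definition delta (k : bool) : pmor oneP Ih :=
  @PMap oneP Ih (fun n _ => constH n k) (@delta_nat k).

Definition isPushout (A B C P : psh) (f : pmor A B) (g : pmor A C)
  (i1 : pmor B P) (i2 : pmor C P) : Prop :=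
  eqm (compm i1 f) (compm i2 g) /\
  forall (Z : psh) (h1 : pmor B Z) (h2 : pmor C Z),
    eqm (compm h1 f) (compm h2 g) ->
    (exists h : pmor P Z, eqm (compm h i1) h1 /\ eqm (compm h i2) h2) /\
    (forall h h' : pmor P Z,
        eqm (compm h i1) h1 -> eqm (compm h i2) h2 ->
        eqm (compm h' i1) h1 -> eqm (compm h' i2) h2 -> eqm h h').

Definition isPushoutProduct (X Y X' Y' P : psh) (f : pmor X Y) (g : pmor X' Y')
  (i1 : pmor (prodP X Y') P) (i2 : pmor (prodP Y X') P) (q : pmor P (prodP Y Y')) : Prop :=
  isPushout (prodm (idm X) g) (prodm f (idm X')) i1 i2 /\
  eqm (compm q i1) (prodm f (idm Y')) /\
  eqm (compm q i2) (prodm (idm Y) g).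

Definition llp (A B X Y : psh) (i : pmor A B) (p : pmor X Y) : Prop :=
  forall (u : pmor A X) (v : pmor B Y), eqm (compm p u) (compm v i) ->
  exists l : pmor B X, eqm (compm l i) u /\ eqm (compm p l) v.

Definition fibration (X Y : psh) (p : pmor X Y) : Prop :=
  forall (k : bool) (A' B' : psh) (m' : pmor A' B'), mono m' ->
  forall (P : psh) (i1 : pmor (prodP oneP B') P) (i2 : pmor (prodP Ih A') P)
         (q : pmor P (prodP Ih B')),
    isPushoutProduct (delta k) m' i1 i2 q -> llp q p.

Definition trivial_cofibration (A B : psh) (i : pmor A B) : Prop :=
  forall (X Y : psh) (p : pmor X Y), fibration p -> llp i p.

From mathcomp Require Import all_boot.
From Stdlib Require Import ClassicalEpsilon ProofIrrelevance.
Set Implicit Arguments. Unset Strict Implicit. Unset Printing Implicit Defensive.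

(* Let p be a fibration and (u, v) a square from q to p. Since q is mono, M is
   the subpresheaf of I x B glued from the graph of r and I x A. First fill the
   open box {0} x B u I x A against p, feeding u along the sheared cylinder
   (t, a) |-> (t \/ r(m a), a); this gives L1 on I x B with p L1 (t, b) =
   v (t \/ r b, b). Then fill the open box {1} x (I x B) u I x M along q, using
   L1 on the copy of I x B and (s, d_r (t, a)) |-> u (d_r (s \/ t, a)) on
   I x (I x A); the connection \/ makes both pieces agree on the face s = 1.
   Restricting the second filler to the face s = 0 lifts u along q over v. *)

Lemma sval_inj (T : Type) (P : T -> Prop) : injective (@sval T P).
Proof. by case=> x px [y py] /= E; subst y; rewrite (proof_irrelevance _ px py). Qed.

Lemma cjoinACA n (a b c d : cube n) :
  cjoin (cjoin a b) (cjoin c d) = cjoin (cjoin a c) (cjoin b d).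
Proof. by apply: eq_from_tnth => i; rewrite !tnth_mktuple orbACA. Qed.

Lemma is_hom_join n (t s : hom n 1) : is_hom [ffun x => cjoin (homf t x) (homf s x)].
Proof. by apply/forallP=> x; apply/forallP=> y; rewrite !ffunE !homf_join cjoinACA. Qed.

Definition joinH n (t s : hom n 1) : hom n 1 := exist (@is_hom n 1) _ (is_hom_join t s).

Lemma joinH_comp n m (t s : hom m 1) (f : hom n m) :
  compH (joinH t s) f = joinH (compH t f) (compH s f).
Proof. by apply: val_inj; apply/ffunP=> x; rewrite /= /homf /= !ffunE. Qed.

Lemma join0H n (t : hom n 1) : joinH (constH n false) t = t.
Proof.
apply: val_inj; apply/ffunP=> x; rewrite /= ffunE /homf /= ffunE.
by apply: eq_from_tnth => i; rewrite tnth_mktuple (ord1 i).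
Qed.

Lemma join1H n (t : hom n 1) : joinH (constH n true) t = constH n true.
Proof.
apply: val_inj; apply/ffunP=> x; rewrite /= !ffunE /homf /= ffunE.
by apply: eq_from_tnth => i; rewrite tnth_mktuple (ord1 i).
Qed.

Definition bang (X : psh) : pmor X oneP :=
  @PMap X oneP (fun _ _ => tt) (fun _ _ _ _ => erefl).

Definition sndm (X Y : psh) : pmor (prodP X Y) Y :=
  @PMap (prodP X Y) Y (fun n (x : ob (prodP X Y) n) => x.2) (fun _ _ _ _ => erefl).

Definition constI (k : bool) (X : psh) : pmor X Ih := compm (delta k) (bang X).

Definition face (k : bool) (X : psh) : pmor X (prodP Ih X) := pairm (constI k X) (idm X).

Lemma joinI_nat (X : psh) n m (f : hom n m) (x : ob (prodP Ih (prodP Ih X)) m) :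
  (joinH (compH x.1 f) (compH x.2.1 f), act X f x.2.2) =
  act (prodP Ih X) f (joinH x.1 x.2.1, x.2.2).
Proof. by rewrite /= joinH_comp. Qed.

Definition joinI (X : psh) : pmor (prodP Ih (prodP Ih X)) (prodP Ih X) :=
  @PMap (prodP Ih (prodP Ih X)) (prodP Ih X) (fun n x => (joinH x.1 x.2.1, x.2.2))
    (@joinI_nat X).

Definition shear (X : psh) (phi : pmor X Ih) : pmor (prodP Ih X) (prodP Ih X) :=
  compm (joinI X) (prodm (idm Ih) (pairm phi (idm X))).

Definition yon (n : nat) : psh := @Psh (fun k => hom k n) (fun k l f g => compH g f)
  (fun k g => compH1 g) (fun k l j g f x => compHA x g f).

Lemma mono_cmp_inj (X Y : psh) (m : pmor X Y) : mono m -> forall n, injective (cmp m n).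
Proof.
move=> m_mono n x y Exy.
have elt_nat (z : ob X n) k l (h : hom k l) (f : ob (yon n) l) :
  act X (compH f h) z = act X h (act X f z) by rewrite act_comp.
pose gx := @PMap (yon n) X (fun k f => act X f x) (elt_nat x).
pose gy := @PMap (yon n) X (fun k f => act X f y) (elt_nat y).
have gxy : eqm (compm m gx) (compm m gy) by move=> k f /=; rewrite !cmp_nat Exy.
by have /= := m_mono _ gx gy gxy n (idH n); rewrite !act_id.
Qed.

Lemma cmp_inj_mono (X Y : psh) (m : pmor X Y) : (forall n, injective (cmp m n)) -> mono m.
Proof. by move=> m_inj Z g h E n x; apply: m_inj; apply: E. Qed.

Lemma glue (W Z X1 X2 : psh) (e1 : pmor X1 W) (e2 : pmor X2 W)
    (h1 : pmor X1 Z) (h2 : pmor X2 Z) :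
  (forall n w, (exists x, cmp e1 n x = w) \/ (exists y, cmp e2 n y = w)) ->
  (forall n x x', cmp e1 n x = cmp e1 n x' -> cmp h1 n x = cmp h1 n x') ->
  (forall n y y', cmp e2 n y = cmp e2 n y' -> cmp h2 n y = cmp h2 n y') ->
  (forall n x y, cmp e1 n x = cmp e2 n y -> cmp h1 n x = cmp h2 n y) ->
  exists h : pmor W Z, eqm (compm h e1) h1 /\ eqm (compm h e2) h2.
Proof.
move=> cover H11 H22 H12.
pose e n (s : ob X1 n + ob X2 n) :=
  match s with inl x => cmp e1 n x | inr y => cmp e2 n y end.
pose hs n (s : ob X1 n + ob X2 n) :=
  match s with inl x => cmp h1 n x | inr y => cmp h2 n y end.
have hs_e n s s' : e n s = e n s' -> hs n s = hs n s'.
  case: s s' => [x|y] [x'|y'] /=; [exact: H11 | exact: H12 | | exact: H22].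
  by move/esym/H12/esym.
have pre n w : {s | e n s = w}.
  apply: constructive_indefinite_description.
  by case: (cover n w) => -[x <-]; [exists (inl x) | exists (inr x)].
pose F n w := hs n (sval (pre n w)).
have F_e n s : F n (e n s) = hs n s := hs_e _ _ _ (svalP (pre n (e n s))).
have F_nat n m (f : hom n m) w : F n (act W f w) = act Z f (F m w).
  case: (pre m w) => s <-; rewrite F_e.
  by case: s => [x|y] /=; rewrite -!cmp_nat; [exact: (F_e n (inl _)) | exact: (F_e n (inr _))].
by exists (PMap F F_nat); split=> n x; [exact: (F_e n (inl x)) | exact: (F_e n (inr x))].
Qed.

Section Subpresheaf.
Variables (X : psh) (S : forall n, ob X n -> Prop).
Hypothesis S_act : forall n m (f : hom n m) x, S x -> S (act X f x).

Definition sub_act n m (f : hom n m) (x : {x | S x}) : {x : ob X n | S x} :=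
  exist _ (act X f (sval x)) (S_act f (svalP x)).

Lemma sub_act_id n x : sub_act (idH n) x = x.
Proof. by apply: sval_inj; rewrite /= act_id. Qed.

Lemma sub_act_comp n m k (g : hom m k) (f : hom n m) x :
  sub_act (compH g f) x = sub_act f (sub_act g x).
Proof. by apply: sval_inj; rewrite /= act_comp. Qed.

Definition subP : psh := Psh (fun n => {x : ob X n | S x}) sub_act sub_act_id sub_act_comp.

Definition subincl : pmor subP X := @PMap subP X (fun n x => sval x) (fun _ _ _ _ => erefl).

Lemma corestr_nat (Z : psh) (h : pmor Z X) (hS : forall n z, S (cmp h n z))
    n m (f : hom n m) z :
  exist _ (cmp h n (act Z f z)) (hS n _) = act subP f (exist _ (cmp h m z) (hS m z)).
Proof. by apply: sval_inj; rewrite /= cmp_nat. Qed.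

Definition corestr (Z : psh) (h : pmor Z X) (hS : forall n z, S (cmp h n z)) :
  pmor Z subP := @PMap Z subP (fun n z => exist _ (cmp h n z) (hS n z)) (corestr_nat hS).

End Subpresheaf.

(* Both legs factor through the covered subpresheaf of P, and uniqueness of maps
   out of P makes its inclusion a split epi. *)
Lemma pushout_cover (A B C P : psh) (f : pmor A B) (g : pmor A C)
    (i1 : pmor B P) (i2 : pmor C P) :
  isPushout f g i1 i2 ->
  forall n w, (exists b, cmp i1 n b = w) \/ (exists c, cmp i2 n c = w).
Proof.
move=> [sq univ] n w.
pose S k (x : ob P k) := (exists b, cmp i1 k b = x) \/ (exists c, cmp i2 k c = x).
have S_act k l (h : hom k l) x : S l x -> S k (act P h x).
  by case=> -[y <-]; rewrite -cmp_nat; [left | right]; eexists.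
pose j1 := corestr S_act (fun k b => or_introl (ex_intro _ b erefl) : S k (cmp i1 k b)).
pose j2 := corestr S_act (fun k c => or_intror (ex_intro _ c erefl) : S k (cmp i2 k c)).
have /univ [[h [hj1 hj2]] _] : eqm (compm j1 f) (compm j2 g).
  by move=> k a; apply: sval_inj; exact: sq.
have [_ uniq] := univ _ i1 i2 sq.
have -> : w = cmp (compm (subincl S_act) h) n w.
  apply: esym; apply: (uniq (compm (subincl S_act) h) (idm P)) => // k x.
    by have /= -> := hj1 k x.
  by have /= -> := hj2 k x.
exact: (svalP (cmp h n w)).
Qed.

Section OpenBox.
Variables (k : bool) (A B : psh) (m : pmor A B).

Definition in_box n (x : ob (prodP Ih B) n) : Prop :=
  x.1 = constH n k \/ exists a, cmp m n a = x.2.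

Lemma in_box_act n l (f : hom n l) x : in_box x -> in_box (act (prodP Ih B) f x).
Proof.
case: x => t b [/= ->|[a /= <-]]; first by left; rewrite (delta_nat k f tt).
by right; exists (act A f a); rewrite cmp_nat.
Qed.

Definition box : psh := subP in_box_act.

Definition box_incl : pmor box (prodP Ih B) := subincl in_box_act.

Definition box_face : pmor (prodP oneP B) box :=
  corestr in_box_act (h := compm (face k B) (sndm oneP B)) (fun _ _ => or_introl erefl).

Definition box_tube : pmor (prodP Ih A) box :=
  corestr in_box_act (h := prodm (idm Ih) m) (fun n x => or_intror (ex_intro _ x.2 erefl)).

Lemma box_cover n (w : ob box n) :
  (exists x, cmp box_face n x = w) \/ (exists x, cmp box_tube n x = w).
Proof.
case: w => -[t b] [/= Et|[a /= Ea]].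
  by left; exists (tt, b); apply: sval_inj; rewrite /= Et.
by right; exists (t, a); apply: sval_inj; rewrite /= Ea.
Qed.

Hypothesis m_mono : mono m.

Lemma box_pushout_product :
  isPushoutProduct (delta k) m box_face box_tube box_incl.
Proof.
split=> //; split=> [n x|Z h1 h2 E]; first exact: sval_inj.
split=> [|h h' Eh1 Eh2 Eh1' Eh2' n w].
  apply: glue; first exact: box_cover.
  - by move=> n [[] b] [[] b'] /(f_equal sval) /= [->].
  - by move=> n [t a] [t' a'] /(f_equal sval) /= [-> /(mono_cmp_inj m_mono) ->].
  - by move=> n [[] b] [t a] /(f_equal sval) /= [<- ->]; exact: (E n (tt, a)).
case: (box_cover w) => -[x <-].
  by rewrite [LHS](Eh1 n x) [RHS](Eh1' n x).
by rewrite [LHS](Eh2 n x) [RHS](Eh2' n x).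
Qed.

End OpenBox.

Lemma fibration_fill (X Y : psh) (p : pmor X Y) (k : bool) (A B : psh) (m : pmor A B)
    (f : pmor B X) (g : pmor (prodP Ih A) X) (w : pmor (prodP Ih B) Y) :
  fibration p -> mono m ->
  eqm (compm g (face k A)) (compm f m) ->
  eqm (compm p f) (compm w (face k B)) ->
  eqm (compm p g) (compm w (prodm (idm Ih) m)) ->
  exists L : pmor (prodP Ih B) X,
    [/\ eqm (compm L (face k B)) f, eqm (compm L (prodm (idm Ih) m)) g
      & eqm (compm p L) w].
Proof.
move=> fib m_mono gf pf pg.
have PP := box_pushout_product k m_mono.
have [[u [u_face u_tube]] _] :=
  proj2 (proj1 PP) X (compm f (sndm oneP B)) g (fun n a => esym (gf n a.2)).
have [L [Lu pL]] : exists L, eqm (compm L (box_incl k m)) u /\ eqm (compm p L) w.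
  apply: (fib k _ _ m m_mono _ _ _ _ PP) => n x.
  case: (box_cover x) => -[y <-] /=.
    by rewrite [cmp u n _](u_face n y); exact: (pf n y.2).
  by rewrite [cmp u n _](u_tube n y); exact: (pg n y).
exists L; split=> // n x.
  exact: etrans (Lu n (cmp (box_face k m) n (tt, x))) (u_face n (tt, x)).
exact: etrans (Lu n (cmp (box_tube k m) n x)) (u_tube n x).
Qed.

Section MappingCylinder.
Variables (A B M : psh) (r : pmor B Ih) (m : pmor A B)
  (c_r : pmor B M) (d_r : pmor (prodP Ih A) M) (q : pmor M (prodP Ih B)).
Hypotheses (m_mono : mono m) (HPO : isPushout m (pairm (compm r m) (idm A)) c_r d_r)
  (q_c_r_eq : eqm (compm q c_r) (pairm r (idm B)))
  (q_d_r_eq : eqm (compm q d_r) (prodm (idm Ih) m)).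

Lemma c_r_m n a : cmp c_r n (cmp m n a) = cmp d_r n (cmp r n (cmp m n a), a).
Proof. exact: (proj1 HPO n a). Qed.

Lemma q_c_r n b : cmp q n (cmp c_r n b) = (cmp r n b, b).
Proof. exact: q_c_r_eq. Qed.

Lemma q_d_r n x : cmp q n (cmp d_r n x) = (x.1, cmp m n x.2).
Proof. exact: q_d_r_eq. Qed.

Lemma q_mono : mono q.
Proof.
apply: cmp_inj_mono => n x y.
have c_d b t a : cmp q n (cmp c_r n b) = cmp q n (cmp d_r n (t, a)) ->
    cmp c_r n b = cmp d_r n (t, a).
  by rewrite q_c_r q_d_r /= => -[<- ->]; exact: c_r_m.
case: (pushout_cover HPO x) => -[x' <-]; case: (pushout_cover HPO y) => -[y' <-].
- by rewrite !q_c_r => -[_ ->].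
- by case: y' => t a; exact: c_d.
- by case: x' => t a E; apply/esym/c_d; rewrite E.
- by case: x' y' => t a [t' a']; rewrite !q_d_r /= => -[-> /(mono_cmp_inj m_mono) ->].
Qed.

Lemma prod_cylinder_factor (Z X : psh) (h1 : pmor (prodP Z B) X)
    (h2 : pmor (prodP Z (prodP Ih A)) X) :
  eqm (compm h1 (prodm (idm Z) m)) (compm h2 (prodm (idm Z) (pairm (compm r m) (idm A)))) ->
  exists h : pmor (prodP Z M) X,
    eqm (compm h (prodm (idm Z) c_r)) h1 /\ eqm (compm h (prodm (idm Z) d_r)) h2.
Proof.
move=> h12; apply: glue.
- move=> n [z mu]; case: (pushout_cover HPO mu) => -[x <-]; [left | right]; by exists (z, x).
- move=> n [z b] [z' b'] /= [<- /(f_equal (cmp q n))]; by rewrite !q_c_r => -[_ <-].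
- move=> n [z [t a]] [z' [t' a']] /= [<- /(f_equal (cmp q n))].
  by rewrite !q_d_r => -[<- /(mono_cmp_inj m_mono) <-].
- move=> n [z b] [z' [t a]] /= [<- /(f_equal (cmp q n))].
  by rewrite q_c_r q_d_r => -[<- ->]; exact: (h12 n (z, a)).
Qed.

Section Lift.
Variables (X Y : psh) (p : pmor X Y) (u : pmor M X) (v : pmor (prodP Ih B) Y).
Hypotheses (fib : fibration p) (uv : eqm (compm p u) (compm v q)).

Lemma puv n mu : cmp p n (cmp u n mu) = cmp v n (cmp q n mu).
Proof. exact: uv. Qed.

Lemma sheared_filler : exists L1 : pmor (prodP Ih B) X,
  [/\ eqm (compm L1 (face false B)) (compm u c_r),
      eqm (compm L1 (prodm (idm Ih) m)) (compm u (compm d_r (shear (compm r m))))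
    & eqm (compm p L1) (compm v (shear r))].
Proof.
apply: (fibration_fill fib m_mono) => n x /=.
- by rewrite join0H c_r_m.
- by rewrite puv q_c_r join0H.
- by rewrite puv q_d_r.
Qed.

Lemma joined_filler (L1 : pmor (prodP Ih B) X) :
  eqm (compm L1 (prodm (idm Ih) m)) (compm u (compm d_r (shear (compm r m)))) ->
  eqm (compm p L1) (compm v (shear r)) ->
  exists L2 : pmor (prodP Ih (prodP Ih B)) X,
    [/\ eqm (compm L2 (prodm (idm Ih) (compm q c_r))) L1,
        eqm (compm L2 (prodm (idm Ih) (compm q d_r))) (compm u (compm d_r (joinI A)))
      & eqm (compm p L2) (compm v (joinI B))].
Proof.
move=> L1_tube L1_p.
have [h [h_c_r h_d_r]] :=
  prod_cylinder_factor (h1 := L1) (h2 := compm u (compm d_r (joinI A))) L1_tube.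
have [L2 [_ L2_q L2_p]] : exists L2 : pmor (prodP Ih (prodP Ih B)) X,
    [/\ eqm (compm L2 (face true _)) (compm L1 (compm (face true B) (sndm Ih B))),
        eqm (compm L2 (prodm (idm Ih) q)) h & eqm (compm p L2) (compm v (joinI B))].
  apply: (fibration_fill fib q_mono).
  - move=> n x; case: (pushout_cover HPO x) => -[y <-] /=.
      by rewrite [LHS](h_c_r n (_, y)) q_c_r.
    by rewrite [LHS](h_d_r n (_, y)) q_d_r /= [RHS](L1_tube n (_, y.2)) /= !join1H.
  - by move=> n x; rewrite /= [LHS](L1_p n _) /= !join1H.
  - move=> n [s mu]; case: (pushout_cover HPO mu) => -[y <-] /=.
      by rewrite [cmp h n _](h_c_r n (s, y)) [LHS](L1_p n _) q_c_r.
    by rewrite [cmp h n _](h_d_r n (s, y)) puv !q_d_r.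
exists L2; split=> n [s x].
- exact: etrans (L2_q n (s, cmp c_r n x)) (h_c_r n (s, x)).
- exact: etrans (L2_q n (s, cmp d_r n x)) (h_d_r n (s, x)).
- exact: L2_p.
Qed.

Lemma cylinder_lift : exists l : pmor (prodP Ih B) X,
  eqm (compm l q) u /\ eqm (compm p l) v.
Proof.
have [L1 [L1_face L1_tube L1_p]] := sheared_filler.
have [L2 [L2_c_r L2_d_r L2_p]] := joined_filler L1_tube L1_p.
exists (compm L2 (face false (prodP Ih B))); split=> n x /=.
  case: (pushout_cover HPO x) => -[y <-].
    by rewrite [LHS](L2_c_r n (_, y)) [LHS](L1_face n y).
  by rewrite [LHS](L2_d_r n (_, y)) /= join0H; case: y.
by rewrite [LHS](L2_p n _) /= join0H; case: x.
Qed.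

End Lift.
End MappingCylinder.

Theorem mainTheorem2 (A B : psh) (r : pmor B Ih) (m : pmor A B) :
  mono m ->
  forall (M : psh) (c_r : pmor B M) (d_r : pmor (prodP Ih A) M),
    isPushout m (pairm (compm r m) (idm A)) c_r d_r ->
  forall (q : pmor M (prodP Ih B)),
    eqm (compm q c_r) (pairm r (idm B)) ->
    eqm (compm q d_r) (prodm (idm Ih) m) ->
    trivial_cofibration q.
Proof.
move=> m_mono M c_r d_r HPO q q_c_r q_d_r X Y p fib u v uv.
exact: (cylinder_lift m_mono HPO q_c_r q_d_r fib uv).
Qed.
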